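(* Let $f:\mathbb R^n\to\mathbb R$ be continuously differentiable, and let $\{x^k\}$ be generated by a linesearch method $x^{k+1}=x^k+t_kd^k$ ($k\in\mathbb N$) with stepsizes $t_k\ge 0$ and directions $d^k\in\mathbb R^n$ such that: (a) $\{d^k\}$ is gradient associated with $\{x^k\}$; (b) $0$ is an accumulation point of $\{d^k\}$; (c) $\sum_{k=1}^\infty t_k\|d^k\|^2<\infty$. Then every accumulation point of $\{x^k\}$ is a stationary point of $f$ (i.e. $\nabla f(\bar x)=0$). Moreover, if $\{t_k\}$ is bounded from above, then: (i) if $\{x^k\}$ is bounded, the set of accumulation points of $\{x^k\}$ is nonempty, compact, and connected; (ii) if $\{x^k\}$ has an isolated accumulation point, then the whole sequence $\{x^k\}$ converges to it.
   Context: A direction sequence $\{d^k\}$ is called gradient associated with $\{x^k\}$ if for every infinite set $J\subset\mathbb N$, $d^k\to0$ as $k\to\infty,\ k\in J$ implies $\nabla f(x^k)\to 0$ as $k\to\infty,\ k\in J$. *)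

From HB Require Import structures.
From mathcomp Require Import all_boot all_order all_algebra.
From mathcomp Require Import all_classical all_reals all_analysis.
Set Implicit Arguments. Unset Strict Implicit. Unset Printing Implicit Defensive.
Import Order.TTheory GRing.Theory Num.Theory.
Import numFieldNormedType.Exports.
Local Open Scope classical_set_scope.
Local Open Scope ring_scope.

Definition grad (R : realType) (n : nat) (f : 'rV[R]_n -> R) (x : 'rV[R]_n)
  : 'rV[R]_n := \row_(i < n) ('d f x (delta_mx 0 i)).

Definition C1 (R : realType) (n : nat) (f : 'rV[R]_n -> R) : Prop :=
  (forall x, differentiable f x) /\ continuous (grad f).

Definition sqnorm (R : realType) (n : nat) (v : 'rV[R]_n) : R :=
  \sum_(i < n) v ord0 i ^+ 2.

Definition acc_pt (T : topologicalType) (u : nat -> T) (p : T) : Prop :=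
  cluster (u @ \oo) p.

Definition grad_assoc (R : realType) (n : nat) (f : 'rV[R]_n -> R)
  (x d : nat -> 'rV[R]_n) : Prop :=
  forall J : set nat, infinite_set J ->
    d @ (within J \oo) --> (0 : 'rV[R]_n) ->
    (fun k => grad f (x k)) @ (within J \oo) --> (0 : 'rV[R]_n).

From HB Require Import structures.
From mathcomp Require Import all_boot all_order all_algebra.
From mathcomp Require Import all_classical all_reals all_analysis.
From mathcomp Require Import lra.
Set Implicit Arguments. Unset Strict Implicit. Unset Printing Implicit Defensive.
Import Order.TTheory GRing.Theory Num.Theory.
Import numFieldNormedType.Exports.
Local Open Scope classical_set_scope.
Local Open Scope ring_scope.

(* If grad f xb <> 0 at an accumulation point xb, the gradient, and by gradient
   association also the direction, is bounded away from 0 near xb: |d^k| >= dl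
   there.  Inside the ball each step satisfies dl |x^(k+1) - x^k| <= t_k |d^k|^2,
   so every run of iterates from near xb to the boundary of the ball costs a fixed
   amount of the convergent series; hence the iterates are eventually trapped in
   the ball and |d^k| >= dl eventually, contradicting that 0 is an accumulation
   point of (d^k).
   For bounded stepsizes |x^(k+1) - x^k|^2 <= M t_k |d^k|^2 -> 0, and (i), (ii) are
   Ostrowski's consequences of vanishing steps: the iterates cannot keep jumping
   between two disjoint open sets covering the accumulation set, nor between an
   isolated accumulation point and a compact annulus around it. *)

Definition frequently (P : nat -> Prop) := forall N, exists2 k, (N <= k)%N & P k.

Lemma frequentlyS (P Q : nat -> Prop) :
  (forall k, P k -> Q k) -> frequently P -> frequently Q.
Proof. by move=> PQ FP N; have [k Nk /PQ] := FP N; exists k. Qed.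

Lemma frequently_near (P Q : nat -> Prop) :
  frequently P -> (\forall k \near \oo, Q k) -> frequently (fun k => P k /\ Q k).
Proof.
move=> FP [M _ MQ] N; have [k Nk Pk] := FP (maxn N M).
exists k; first exact: leq_trans (leq_maxl _ _) Nk.
by split=> //; apply: MQ; exact: leq_trans (leq_maxr _ _) Nk.
Qed.

Lemma not_near_frequently (P : nat -> Prop) :
  ~ (\forall k \near \oo, P k) -> frequently (fun k => ~ P k).
Proof.
move=> NP N; apply: contrapT => /forall2NP FP; apply: NP; exists N => // k /= Nk.
by have [//|/contrapT] := FP k.
Qed.

Lemma frequently_infinite (J : set nat) : frequently J -> infinite_set J.
Proof.
move=> FJ /finite_fsetP [X eX].
have [k Nk Jk] := FJ (\max_(i <- finmap.enum_fset X) i).+1.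
have kX : k \in finmap.enum_fset X by move: Jk; rewrite eX.
have := leq_bigmax_seq (F := id) (P := xpredT) k kX erefl.
by rewrite leqNgt Nk.
Qed.

Lemma frequently_exit (P : nat -> Prop) m : P m -> frequently (fun k => ~ P k) ->
  exists2 j, (m < j)%N & (forall k, (m <= k < j)%N -> P k) /\ ~ P j.
Proof.
move=> Pm FNP.
have exit : exists j, (m <= j)%N && ~~ `[< P j >].
  by have [j mj NPj] := FNP m; exists j; rewrite mj; apply/asboolPn.
case: (ex_minnP exit) => j /andP [mj /asboolPn NPj] jmin.
exists j; first by rewrite ltn_neqAle mj andbT; apply/eqP => mjE; apply: NPj; rewrite -mjE.
split=> // k /andP [mk kj]; apply/asboolP; apply: contraTT kj => NPk.
by rewrite -leqNgt jmin // mk.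
Qed.

Lemma frequently_crossing (P : nat -> Prop) :
  frequently P -> frequently (fun k => ~ P k) -> frequently (fun k => P k /\ ~ P k.+1).
Proof.
move=> FP FNP N; have [m Nm Pm] := FP N.
have [j mj [Pmj NPj]] := frequently_exit Pm FNP.
have j0 : (0 < j)%N := leq_ltn_trans (leq0n m) mj.
have mj1 : (m <= j.-1)%N by rewrite -ltnS prednK.
exists j.-1; first exact: leq_trans Nm mj1.
by rewrite prednK //; split=> //; apply: Pmj; rewrite mj1 ltn_predL.
Qed.

Section accumulation_points.
Variables (T : topologicalType) (x : nat -> T).

Lemma acc_pt_closed : closed (acc_pt x).
Proof. by rewrite /acc_pt clusterE; apply: closed_bigI => A _; exact: closed_closure. Qed.

Lemma acc_pt_sub (K : set T) : closed K -> (forall k, K (x k)) -> acc_pt x `<=` K.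
Proof.
by move=> cK xK p px; apply: cK => B pB; apply: px pB; exists 0%N => // k _; exact: xK.
Qed.

End accumulation_points.

Section normed_sequences.
Variables (R : realType) (V : normedModType R).
Implicit Types (x v : nat -> V) (p : V).

Lemma cluster_withinP x (J : set nat) p :
  cluster (x @ within J \oo) p <->
  forall e, 0 < e -> frequently (fun k => J k /\ `|p - x k| < e).
Proof.
split=> [Hp e e0 N|Hp A B [N _ NA] /nbhs_ballP[e e0 eB]].
  have JN : (x @ within J \oo) (x @` [set k | (N <= k)%N /\ J k]).
    by exists N => // k /= Nk Jk; exists k.
  have [_ [[k [Nk Jk] <-] xk]] := Hp _ _ JN (nbhsx_ballx p e e0).
  by exists k => //; split=> //; move: xk; rewrite -ball_normE.
have [k Nk [Jk xk]] := Hp e e0 N.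
by exists (x k); split; [exact: NA | apply: eB; rewrite -ball_normE].
Qed.

Lemma acc_ptP x p :
  acc_pt x p <-> forall e, 0 < e -> frequently (fun k => `|p - x k| < e).
Proof.
have -> : acc_pt x p = cluster (x @ within setT \oo) p.
  congr (cluster (x @ _) p); rewrite /within; apply/funext => P.
  by congr (\oo _); rewrite funeqE => k; rewrite propeqE; split=> // /(_ I).
rewrite cluster_withinP; split=> Hp e /Hp; apply: frequentlyS => k //.
by case.
Qed.

Lemma acc_pt_frequently_nbhs x (U : set V) p :
  acc_pt x p -> nbhs p U -> frequently (fun k => U (x k)).
Proof.
move=> /acc_ptP px /nbhs_ballP [r r0 rU].
by apply: frequentlyS (px r r0) => k xk; apply: rU; rewrite -ball_normE.
Qed.

Lemma compact_frequently_cluster x (J : nat -> Prop) (S : set V) : compact S ->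
  frequently (fun k => J k /\ S (x k)) ->
  exists2 p, S p & forall e, 0 < e -> frequently (fun k => J k /\ `|p - x k| < e).
Proof.
move=> cS FJS; pose F := x @ within [set k | J k /\ S (x k)] \oo.
have PF : ProperFilter F.
  apply: Build_ProperFilter => -[N _ HN]; have [k Nk JSk] := FJS N.
  exact: HN k Nk JSk.
have FS : F S by exists 0%N => // k _ [].
have [p [Sp /cluster_withinP cp]] := cS _ PF FS.
by exists p => // e /cp; apply: frequentlyS => k [[]].
Qed.

Lemma cvg0_within_frequently v (J : set nat) : frequently J ->
  v @ within J \oo --> 0 -> forall e, 0 < e -> frequently (fun k => J k /\ `|v k| < e).
Proof.
move=> FJ /cvgrPdist_lt vJ e /vJ [M _ HM] N; have [k Nk Jk] := FJ (maxn N M).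
exists k; first exact: leq_trans (leq_maxl _ _) Nk.
split=> //; rewrite -normrN -sub0r; apply: HM Jk.
exact: leq_trans (leq_maxr _ _) Nk.
Qed.

Lemma frequently_small_within_cvg0 v (P : nat -> Prop) :
  (forall e, 0 < e -> frequently (fun k => P k /\ `|v k| < e)) ->
  exists2 J : set nat, J `<=` P & frequently J /\ v @ within J \oo --> 0.
Proof.
move=> Pv.
have /choice [g Hg] : forall m, exists k, [/\ (m <= k)%N, P k & `|v k| < m.+1%:R^-1].
  move=> m; have m0 : 0 < m.+1%:R^-1 :> R by rewrite invr_gt0 ltr0Sn.
  by have [k mk [Pk vk]] := Pv _ m0 m; exists k.
exists (range g); first by move=> _ [m _ <-]; case: (Hg m).
split; first by move=> N; exists (g N); [case: (Hg N) | exists N].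
apply/cvgrPdist_lt => e e0; have [M _ HM] := near_infty_natSinv_lt (PosNum e0).
(* g need not be monotone, but an index beyond every g i with i < M is some g m with m >= M *)
exists (\max_(i < M) g i).+1 => // k /= gmax [m _ gmk]; subst k.
rewrite sub0r normrN; apply: lt_trans (HM m _); first by case: (Hg m).
rewrite /= leqNgt; apply/negP => mM.
have := leq_trans gmax (leq_bigmax (F := fun i : 'I_M => g i) (Ordinal mM)).
by rewrite ltnn.
Qed.

End normed_sequences.

Lemma cvg_series_tail (R : realType) (V : normedModType R) (u : nat -> V) :
  cvgn (series u) -> forall e, 0 < e ->
  \forall m \near \oo, forall j, `|\sum_(m <= k < j) u k| < e.
Proof.
move=> /cvg_cauchy /cauchy_seriesP cu e e0.
have [[A B] /= [[N1 _ HA] [N2 _ HB]] H] := cu e e0.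
exists (maxn N1 N2) => // m /= Nm j.
have [mj|jm] := leqP m j; last by rewrite big_geq ?normr0 // ltnW.
apply: (H (m, j)); split; [apply: HA | apply: HB] => /=.
  exact: leq_trans (leq_maxl _ _) Nm.
exact: leq_trans (leq_maxr _ _) (leq_trans Nm mj).
Qed.

Lemma near_normr_bounded_away (R : realType) (T : topologicalType)
    (V : normedModType R) (g : T -> V) p :
  {for p, continuous g} -> g p != 0 -> exists2 c, 0 < c & \forall y \near p, c < `|g y|.
Proof.
move=> /cvgrPdist_lt gp gp0; have c0 : 0 < `|g p| / 2 by rewrite divr_gt0 ?normr_gt0.
exists (`|g p| / 2) => //; apply: filterS (gp _ c0) => y.
by have := lerB_dist (g p) (g y); lra.
Qed.

Lemma sqnorm_ge0 (R : realType) n (v : 'rV[R]_n) : 0 <= sqnorm v.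
Proof. by apply: sumr_ge0 => i _; exact: sqr_ge0. Qed.

Lemma normr_sqr_le_sqnorm (R : realType) n (v : 'rV[R]_n) : `|v| ^+ 2 <= sqnorm v.
Proof.
suff nv : `|v| <= Num.sqrt (sqnorm v).
  by rewrite -(sqr_sqrtr (sqnorm_ge0 v)) ler_pXn2r ?nnegrE ?sqrtr_ge0.
rewrite [leLHS]mx_normrE; apply: bigmax_le => [|[i j] _ /=]; first exact: sqrtr_ge0.
rewrite (ord1 i) -sqrtr_sqr ler_sqrt ?sqnorm_ge0 // /sqnorm (bigD1 j) //= lerDl.
by apply: sumr_ge0 => k _; exact: sqr_ge0.
Qed.

Lemma linesearch_steps_cvg0 (R : realType) n (d : nat -> 'rV[R]_n) (t : nat -> R) M :
  (forall k, 0 <= t k) -> (forall k, t k <= M) ->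
  cvgn (series (fun k => t k * sqnorm (d k))) ->
  (fun k => t k *: d k) @ \oo --> (0 : 'rV[R]_n).
Proof.
move=> t0 tM /cvg_series_cvg_0 /cvgrPdist_lt a0; apply/cvgrPdist_lt => e e0.
have M1 : 0 < M + 1 by rewrite ltr_wpDl // (le_trans (t0 0%N) (tM 0%N)).
near=> k; rewrite sub0r normrN normrZ ger0_norm //.
have : `|0 - t k * sqnorm (d k)| < e ^+ 2 / (M + 1).
  by near: k; apply: a0; rewrite divr_gt0 ?exprn_gt0.
rewrite sub0r normrN ger0_norm ?mulr_ge0 ?sqnorm_ge0 // ltr_pdivlMr //.
have := normr_sqr_le_sqnorm (d k); have := normr_ge0 (d k).
move: (t0 k) (tM k); move: (t k) (`|d k|) (sqnorm (d k)) => s a q s0 sM a0' aq sqe.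
have sq0 : 0 <= s * q by rewrite mulr_ge0 // (le_trans (sqr_ge0 a)).
have : (s * a) ^+ 2 <= s * q * (M + 1) by nra.
nra.
Unshelve. all: by end_near. Qed.

Section gradient_associated.
Variables (R : realType) (n : nat) (f : 'rV[R]_n -> R) (x d : nat -> 'rV[R]_n).
Hypothesis fxd_grad_assoc : grad_assoc f x d.

Lemma grad_assoc_frequently (P : nat -> Prop) :
  (forall e, 0 < e -> frequently (fun k => P k /\ `|d k| < e)) ->
  forall e, 0 < e -> frequently (fun k => P k /\ `|grad f (x k)| < e).
Proof.
move=> /frequently_small_within_cvg0 [J JP [FJ dJ]] e e0.
have gJ := fxd_grad_assoc (frequently_infinite FJ) dJ.
by apply: frequentlyS (cvg0_within_frequently FJ gJ e0) => k [/JP].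
Qed.

Lemma grad_assoc_away (P : nat -> Prop) c : 0 < c ->
  (forall k, P k -> c < `|grad f (x k)|) ->
  exists2 dl, 0 < dl & \forall k \near \oo, P k -> dl <= `|d k|.
Proof.
move=> c0 gP; apply: contrapT => /forall2NP nodl.
have : frequently (fun k => P k /\ `|grad f (x k)| < c).
  apply: grad_assoc_frequently c0 => dl dl0.
  have [//|/not_near_frequently] := nodl dl; apply: frequentlyS => k.
  by move=> /not_implyP [? /negP]; rewrite -ltNge.
by move=> /(_ 0%N) [k _ [/gP ck gk]]; have := lt_trans gk ck; rewrite ltxx.
Qed.

End gradient_associated.

Lemma linesearch_trapped (R : realType) n (x d : nat -> 'rV[R]_n) (t : nat -> R)
    xb e dl :
  (forall k, 0 <= t k) -> (forall k, x k.+1 = x k + t k *: d k) ->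
  cvgn (series (fun k => t k * sqnorm (d k))) -> acc_pt x xb -> 0 < e -> 0 < dl ->
  (\forall k \near \oo, `|xb - x k| < e -> dl <= `|d k|) ->
  \forall k \near \oo, `|xb - x k| < e.
Proof.
move=> t0 xS cs xbP e0 dl0 [N0 _ dlN0]; apply: contrapT => /not_near_frequently leave.
have e2 : 0 < e / 2 by rewrite divr_gt0.
have [N1 _ tail] := cvg_series_tail cs (mulr_gt0 dl0 e2).
have [m Nm xm] := (acc_ptP x xb).1 xbP _ e2 (maxn N0 N1).
have xm_near : `|xb - x m| < e by lra.
have [j mj [stay NPj]] := frequently_exit xm_near leave.
have step k : (m <= k < j)%N -> dl * `|x k.+1 - x k| <= t k * sqnorm (d k).
  move=> /andP [mk kj]; rewrite xS addrC addKr normrZ ger0_norm //.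
  have dlk : dl <= `|d k|.
    apply: (dlN0 k (leq_trans (leq_maxl _ _) (leq_trans Nm mk)) (stay k _)).
    by rewrite mk kj.
  have := normr_sqr_le_sqnorm (d k); have := t0 k.
  have : dl * `|d k| <= `|d k| ^+ 2 by rewrite expr2 ler_wpM2r.
  nra.
have len : e / 2 <= \sum_(m <= k < j) `|x k.+1 - x k|.
  apply: le_trans _ (ler_norm_sum _ _ _); rewrite telescope_sumr ?(ltnW mj) //.
  have := ler_distD (x m) xb (x j); rewrite (distrC (x m)); lra.
have : dl * (e / 2) <= \sum_(m <= k < j) t k * sqnorm (d k).
  by apply: le_trans _ (ler_sum_nat step); rewrite -mulr_sumr ler_wpM2l ?(ltW dl0).
have := tail m (leq_trans (leq_maxr _ _) Nm) j.
have := ler_norm (\sum_(m <= k < j) t k * sqnorm (d k)); lra.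
Qed.

Lemma acc_pt_stationary (R : realType) n (f : 'rV[R]_n -> R) (x d : nat -> 'rV[R]_n)
    (t : nat -> R) xb :
  continuous (grad f) -> (forall k, 0 <= t k) ->
  (forall k, x k.+1 = x k + t k *: d k) -> grad_assoc f x d -> acc_pt d 0 ->
  cvgn (series (fun k => t k * sqnorm (d k))) ->
  acc_pt x xb -> grad f xb = 0.
Proof.
move=> cg t0 xS ga d0 cs xbP; apply: contrapT => /eqP gxb.
have [c c0 /nbhs_ballP [e e0 eg]] := near_normr_bounded_away (cg xb) gxb.
have [dl dl0 dl_near] := grad_assoc_away ga (P := fun k => `|xb - x k| < e) c0
  (fun k xk => eg (x k) (ltac:(by rewrite -ball_normE))).
have [k _ [dk [xk /(_ xk)]]] := frequently_near ((acc_ptP d 0).1 d0 dl dl0)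
  (filterI (linesearch_trapped t0 xS cs xbP e0 dl0 dl_near) dl_near) 0%N.
by rewrite sub0r normrN in dk; rewrite leNgt dk.
Qed.

Lemma closed_connected_open_cover (R : realType) (T : pseudoMetricType R) (A : set T) :
  closed A ->
  (forall U0 U1, open U0 -> open U1 -> U0 `&` U1 = set0 -> A `<=` U0 `|` U1 ->
     A `<=` U0 \/ A `<=` U1) ->
  connected A.
Proof.
move=> cA Acover; apply: contrapT => /connectedPn [E [E0 AE [sE1 sE0]]].
have EA b : E b `<=` A by rewrite AE; case: b => ? ?; [right | left].
have cE b : closed (E b).
  move=> q Eq; have Aq : A q by apply: cA; apply: closureS Eq; exact: EA.
  move: Aq; rewrite AE; case: b Eq => Eq [] Ebq //.
  - by have : (E false `&` closure (E true)) q by []; rewrite sE0.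
  - by have : (closure (E false) `&` E true) q by []; rewrite sE1.
have [U0 [U1 [oU0 oU1 EU0 EU1 U01]]] := (@normal_openP R T).1
  (@pseudometric_normal R T) _ _ (cE false) (cE true) (separated_disjoint (conj sE1 sE0)).
have [AU0 | AU1] : A `<=` U0 \/ A `<=` U1.
  by apply: Acover => // q; rewrite AE => -[/EU0|/EU1]; [left | right].
- have [q Eq] := E0 true.
  have : (U0 `&` U1) q by split; [apply/AU0/(EA true) | exact: EU1].
  by rewrite U01.
- have [q Eq] := E0 false.
  have : (U0 `&` U1) q by split; [exact: EU0 | apply/AU1/(EA false)].
  by rewrite U01.
Qed.

Lemma closed_ball_compact (R : realType) n (p : 'rV[R]_n) r : 0 < r ->
  compact (closed_ball p r).
Proof.
move=> r0; apply: bounded_closed_compact; last exact: closed_ball_closed.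
exists (`|p| + r); split; first exact: num_real.
move=> M pM y; rewrite closed_ballE // /closed_ball_ /= => py.
apply: le_trans (ltW pM); have := ler_distD p 0 y; rewrite !sub0r !normrN; lra.
Qed.

Lemma bounded_set_sub_compact (R : realType) n (A : set 'rV[R]_n) :
  bounded_set A -> exists2 K, compact K & A `<=` K.
Proof.
move=> [M [Mr AM]]; have M1 : 0 < `|M| + 1 by rewrite ltr_wpDl.
exists (closed_ball 0 (`|M| + 1)); first exact: closed_ball_compact.
move=> y Ay; rewrite closed_ballE // /closed_ball_ /= sub0r normrN; apply: AM => //.
by apply: le_lt_trans (real_ler_norm Mr) _; rewrite ltrDl.
Qed.

Section Ostrowski.
Variables (R : realType) (n : nat) (x : nat -> 'rV[R]_n).

Lemma acc_pt_nonempty_compact :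
  bounded_set (range x) -> acc_pt x !=set0 /\ compact (acc_pt x).
Proof.
move=> /bounded_set_sub_compact [K cK xK].
have xK' k : K (x k) by apply: xK; exists k.
split; last first.
  have clK : closed K := compact_closed (@norm_hausdorff R _) cK.
  exact (subclosed_compact (@acc_pt_closed _ x) cK (acc_pt_sub clK xK')).
have [p _ px] := @compact_frequently_cluster _ _ x (fun=> True) _ cK
  (fun N => ex_intro2 _ _ N (leqnn N) (conj I (xK' N))).
by exists p; apply/acc_ptP => e /px; apply: frequentlyS => k [].
Qed.

Hypothesis x_steps : (fun k => x k.+1 - x k) @ \oo --> (0 : 'rV[R]_n).

Let near_steps_lt e : 0 < e -> \forall k \near \oo, `|x k - x k.+1| < e.
Proof.
move=> e0; apply: filterS ((cvgrPdist_lt _ _).1 x_steps e e0) => k.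
by rewrite sub0r normrN distrC.
Qed.

Lemma acc_pt_connected : bounded_set (range x) -> connected (acc_pt x).
Proof.
move=> /bounded_set_sub_compact [K cK xK].
apply: closed_connected_open_cover (@acc_pt_closed _ x) _ => U0 U1 oU0 oU1 U01 AU.
apply: contrapT => /not_orP [/existsNP [a1 /not_implyP [Aa1 NU0a1]]].
move=> /existsNP [a0 /not_implyP [Aa0 NU1a0]].
have U0a0 : U0 a0 by case: (AU a0 Aa0).
have U1a1 : U1 a1 by case: (AU a1 Aa1).
have disj q : U0 q -> U1 q -> False.
  by move=> ? ?; have : (U0 `&` U1) q by []; rewrite U01.
have in0 := acc_pt_frequently_nbhs Aa0 (open_nbhs_nbhs (conj oU0 U0a0)).
have out0 : frequently (fun k => ~ U0 (x k)).
  have := acc_pt_frequently_nbhs Aa1 (open_nbhs_nbhs (conj oU1 U1a1)).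
  by apply: frequentlyS => k /[swap] /disj.
have [p _ pJ] := @compact_frequently_cluster _ _ x
  (fun k => U0 (x k) /\ ~ U0 (x k.+1)) _ cK
  (frequentlyS (fun k Jk => conj Jk (xK _ (ex_intro2 _ _ k I erefl)))
     (frequently_crossing in0 out0)).
have Ap : acc_pt x p by apply/acc_ptP => e /pJ; apply: frequentlyS => k [].
case: (AU p Ap) => [U0p | U1p].
- have /nbhs_ballP [r r0 rU] := open_nbhs_nbhs (conj oU0 U0p).
  have r2 : 0 < r / 2 by rewrite divr_gt0.
  have [k _ [[[_ NU0k1] pk] sk]] := frequently_near (pJ _ r2) (near_steps_lt r2) 0%N.
  apply: NU0k1; apply: rU; rewrite -ball_normE /=.
  by have := ler_distD (x k) p (x k.+1); lra.
- have /nbhs_ballP [r r0 rU] := open_nbhs_nbhs (conj oU1 U1p).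
  have [k _ [[U0k _] pk]] := pJ r r0 0%N.
  by apply: (disj (x k) U0k); apply: rU; rewrite -ball_normE.
Qed.

Lemma acc_pt_isolated_cvg xb : acc_pt x xb ->
  (exists U, nbhs xb U /\ (forall y, U y -> acc_pt x y -> y = xb)) ->
  x @ \oo --> xb.
Proof.
move=> xbP [U [/nbhs_ballP [r r0 rU] iso]]; apply/cvgrPdist_lt => e e0.
pose h := Num.min e (r / 3).
have h0 : 0 < h by rewrite lt_min e0 divr_gt0.
have he : h <= e by rewrite ge_min lexx.
have hr : h <= r / 3 by rewrite ge_min lexx orbT.
apply: contrapT => /not_near_frequently far.
have out : frequently (fun k => ~ `|xb - x k| < h).
  by apply: frequentlyS far => k ek hk; apply: ek; exact: lt_le_trans hk he.
pose S := closed_ball xb (2 * h) `&` ~` ball xb h.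
have cS : compact S.
  apply: compact_closedI; first by apply: closed_ball_compact; rewrite mulr_gt0.
  exact: open_closedC (ball_open _ _).
have inS : frequently (fun k => True /\ S (x k)).
  move=> N; have [k Nk [[xk NPk1] sk]] := frequently_near
    (frequently_crossing ((acc_ptP x xb).1 xbP h h0) out) (near_steps_lt h0) N.
  exists k.+1; first exact: leqW.
  split=> //; split; last by rewrite -ball_normE.
  rewrite closed_ballE ?mulr_gt0 // /closed_ball_ /=.
  by have := ler_distD (x k) xb (x k.+1); lra.
have [p [Sp NSp] px] := compact_frequently_cluster cS inS.
have Up : U p.
  apply: rU; rewrite -ball_normE /=.
  by move: Sp; rewrite closed_ballE ?mulr_gt0 // /closed_ball_ /=; lra.
have pxb : p = xb.
  by apply: (iso p Up); apply/acc_ptP => e' /px; apply: frequentlyS => k [].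
by apply: NSp; rewrite pxb; exact: ballxx.
Qed.

End Ostrowski.

Theorem mainTheorem2 (R : realType) (n : nat) (f : 'rV[R]_n -> R)
  (x d : nat -> 'rV[R]_n) (t : nat -> R) :
  C1 f ->
  (forall k, 0 <= t k) ->
  (forall k, x k.+1 = x k + t k *: d k) ->
  grad_assoc f x d ->
  acc_pt d 0 ->
  cvgn (series (fun k => t k * sqnorm (d k))) ->
  (forall xb, acc_pt x xb -> grad f xb = 0) /\
  ((exists M : R, forall k, t k <= M) ->
     (bounded_set (range x) ->
        acc_pt x !=set0 /\ compact (acc_pt x) /\ connected (acc_pt x)) /\
     (forall xb, acc_pt x xb ->
        (exists U, nbhs xb U /\ (forall y, U y -> acc_pt x y -> y = xb)) ->
        x @ \oo --> xb)).
Proof.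
move=> [_ cg] t0 xS ga d0 cs; split=> [xb|[M tM]].
  exact: (acc_pt_stationary cg t0 xS ga d0 cs (xb := xb)).
have steps : (fun k => x k.+1 - x k) @ \oo --> (0 : 'rV[R]_n).
  have -> : (fun k => x k.+1 - x k) = (fun k => t k *: d k).
    by apply/funext => k; rewrite xS addrC addKr.
  exact: linesearch_steps_cvg0 t0 tM cs.
split=> [bx | xb].
  have [ne cpt] := acc_pt_nonempty_compact bx.
  by split=> //; split=> //; exact: acc_pt_connected steps bx.
exact: (acc_pt_isolated_cvg steps (xb := xb)).
Qed.
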